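(* Let $\mathcal{C}$ be a Frobenius category with stable category $\underline{\mathcal{C}}$ and projection functor $\pi\colon\mathcal{C}\to\underline{\mathcal{C}}$. Let $\mathcal{T}$ be a subcategory of $\mathcal{C}$ containing all projective-injective objects, and let $M\in\mathcal{C}$. If $\pi(M)$ has a $\pi(\mathcal{T})$-precover (respectively $\pi(\mathcal{T})$-preenvelope) in $\underline{\mathcal{C}}$, then $M$ has a $\mathcal{T}$-precover (respectively $\mathcal{T}$-preenvelope) in $\mathcal{C}$.
   Context: For a subcategory $\mathcal{B}$ of a category, a $\mathcal{B}$-precover of $M$ is a morphism $f\colon B\to M$ with $B\in\mathcal{B}$ such that every morphism $B'\to M$ with $B'\in\mathcal{B}$ factors through $f$; a $\mathcal{B}$-preenvelope is defined dually. Subcategories are full and additive. The stable category $\underline{\mathcal{C}}$ has the same objects as $\mathcal{C}$ and morphisms modulo those factoring through projective-injective objects. *)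

From HB Require Import structures.
From mathcomp Require Import all_boot all_order all_algebra.
Set Implicit Arguments. Unset Strict Implicit. Unset Printing Implicit Defensive.
Import GRing.Theory.
Local Open Scope ring_scope.

Record precat := Precat {
  obj : Type;
  hom : obj -> obj -> zmodType;
  comp : forall a b c : obj, hom b c -> hom a b -> hom a c;
  idm : forall a : obj, hom a a;
  compA : forall a b c d (h : hom c d) (g : hom b c) (f : hom a b),
    comp h (comp g f) = comp (comp h g) f;
  comp1l : forall a b (f : hom a b), comp (idm b) f = f;
  comp1r : forall a b (f : hom a b), comp f (idm a) = f;
  compDl : forall a b c (g g' : hom b c) (f : hom a b),
    comp (g + g') f = comp g f + comp g' f;
  compDr : forall a b c (g : hom b c) (f f' : hom a b),
    comp g (f + f') = comp g f + comp g f'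
}.
Arguments comp {p a b c}.
Arguments idm {p}.
Notation "g \oc f" := (comp g f) (at level 40, left associativity).

Section Cat.
Variable C : precat.
Local Notation Ob := (obj C).
Local Notation Hom := (@hom C).

Definition is_zero_obj (z : Ob) : Prop :=
  forall a (f : Hom a z) (g : Hom z a), f = 0 /\ g = 0.

Definition is_biproduct (a b c : Ob) : Prop :=
  exists (i1 : Hom a c) (i2 : Hom b c) (p1 : Hom c a) (p2 : Hom c b),
    [/\ p1 \oc i1 = idm a, p2 \oc i2 = idm b, p1 \oc i2 = 0, p2 \oc i1 = 0
      & i1 \oc p1 + i2 \oc p2 = idm c].

Definition additive : Prop :=
  (exists z, is_zero_obj z) /\ (forall a b, exists c, is_biproduct a b c).

Definition is_iso a b (f : Hom a b) : Prop :=
  exists g : Hom b a, g \oc f = idm a /\ f \oc g = idm b.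

Definition is_kernel k a b (i : Hom k a) (f : Hom a b) : Prop :=
  f \oc i = 0 /\
  forall x (g : Hom x a), f \oc g = 0 ->
    exists u : Hom x k, i \oc u = g /\ forall u', i \oc u' = g -> u' = u.

Definition is_cokernel a b q (f : Hom a b) (d : Hom b q) : Prop :=
  d \oc f = 0 /\
  forall x (g : Hom b x), g \oc f = 0 ->
    exists u : Hom q x, u \oc d = g /\ forall u', u' \oc d = g -> u' = u.

Definition is_pushout a b a' p (i : Hom a b) (f : Hom a a')
  (i' : Hom a' p) (f' : Hom b p) : Prop :=
  i' \oc f = f' \oc i /\
  forall q (u : Hom a' q) (v : Hom b q), u \oc f = v \oc i ->
    exists w : Hom p q, (w \oc i' = u /\ w \oc f' = v) /\
      forall w', w' \oc i' = u -> w' \oc f' = v -> w' = w.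

Definition is_pullback b c c' p (d : Hom b c) (f : Hom c' c)
  (d' : Hom p c') (f' : Hom p b) : Prop :=
  f \oc d' = d \oc f' /\
  forall q (u : Hom q c') (v : Hom q b), f \oc u = d \oc v ->
    exists w : Hom q p, (d' \oc w = u /\ f' \oc w = v) /\
      forall w', d' \oc w' = u -> f' \oc w' = v -> w' = w.

Definition conflations := forall a b c : Ob, Hom a b -> Hom b c -> Prop.

Section Exact.
Variable E : conflations.

Definition adm_mono a b (i : Hom a b) : Prop := exists c (d : Hom b c), E i d.
Definition adm_epi b c (d : Hom b c) : Prop := exists a (i : Hom a b), E i d.

(* Quillen exact structure, axioms as in Buehler, "Exact categories", Def. 2.1 *)
Definition exact_structure : Prop :=
  [/\
      (forall a b c (i : Hom a b) (d : Hom b c), E i d ->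
         is_kernel i d /\ is_cokernel i d),
      (forall a b c a' b' c' (i : Hom a b) (d : Hom b c)
              (i' : Hom a' b') (d' : Hom b' c')
              (x : Hom a a') (y : Hom b b') (z : Hom c c'),
         E i d -> is_iso x -> is_iso y -> is_iso z ->
         y \oc i = i' \oc x -> z \oc d = d' \oc y -> E i' d'),
      (forall a, adm_mono (idm a)) /\ (forall a, adm_epi (idm a)),
      (forall a b c (f : Hom a b) (g : Hom b c),
         adm_mono f -> adm_mono g -> adm_mono (g \oc f)) /\
      (forall a b c (f : Hom a b) (g : Hom b c),
         adm_epi f -> adm_epi g -> adm_epi (g \oc f))
    &
      (forall a b a' (i : Hom a b) (f : Hom a a'), adm_mono i ->
         exists p (i' : Hom a' p) (f' : Hom b p),
           is_pushout i f i' f' /\ adm_mono i') /\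
      (forall b c c' (d : Hom b c) (f : Hom c' c), adm_epi d ->
         exists p (d' : Hom p c') (f' : Hom p b),
           is_pullback d f d' f' /\ adm_epi d')].

Definition projective (P : Ob) : Prop :=
  forall b c (d : Hom b c), adm_epi d ->
    forall g : Hom P c, exists h : Hom P b, d \oc h = g.

Definition injective (I : Ob) : Prop :=
  forall a b (i : Hom a b), adm_mono i ->
    forall g : Hom a I, exists h : Hom b I, h \oc i = g.

Definition proj_inj (X : Ob) : Prop := projective X /\ injective X.

Definition frobenius : Prop :=
  [/\ additive, exact_structure,
      (forall M, exists P (d : Hom P M), projective P /\ adm_epi d),
      (forall M, exists I (i : Hom M I), injective I /\ adm_mono i)
    & (forall X, projective X <-> injective X)].

(* Stable category: same objects, Hom modulo morphisms factoring through a
   projective-injective object.  We present its morphisms via representatives: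
   [f] = [g] in the stable category iff stable_eq f g. *)
Definition factors_proj_inj a b (f : Hom a b) : Prop :=
  exists Q (u : Hom a Q) (v : Hom Q b), proj_inj Q /\ f = v \oc u.

Definition stable_eq a b (f g : Hom a b) : Prop := factors_proj_inj (f - g).

End Exact.

(* full additive subcategories, given by a predicate on objects *)
Definition additive_subcat (T : Ob -> Prop) : Prop :=
  forall a b c, T a -> T b -> is_biproduct a b c -> T c.

Section Approx.
Variable T : Ob -> Prop.

Definition is_precover B M (f : Hom B M) : Prop :=
  T B /\ forall B' (g : Hom B' M), T B' -> exists h : Hom B' B, f \oc h = g.
Definition is_preenvelope M B (f : Hom M B) : Prop :=
  T B /\ forall B' (g : Hom M B'), T B' -> exists h : Hom B B', h \oc f = g.
Definition has_precover M : Prop := exists B (f : Hom B M), is_precover f.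
Definition has_preenvelope M : Prop := exists B (f : Hom M B), is_preenvelope f.

Variable E : conflations.
(* pi(T)-precover / preenvelope of pi(M) in the stable category (pi is the
   identity on objects; morphisms of the stable category are classes [f]) *)
Definition is_stable_precover B M (f : Hom B M) : Prop :=
  T B /\ forall B' (g : Hom B' M), T B' ->
    exists h : Hom B' B, stable_eq E (f \oc h) g.
Definition is_stable_preenvelope M B (f : Hom M B) : Prop :=
  T B /\ forall B' (g : Hom M B'), T B' ->
    exists h : Hom B B', stable_eq E (h \oc f) g.
Definition has_stable_precover M : Prop :=
  exists B (f : Hom B M), is_stable_precover f.
Definition has_stable_preenvelope M : Prop :=
  exists B (f : Hom M B), is_stable_preenvelope f.
End Approx.

End Cat.

(* Take a stable T-precover f : B -> M and a deflation d : P -> M with P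
   projective-injective (so P lies in T).  If g : B' -> M with B' in T, then
   f h - g factors through a projective-injective object, hence through d,
   say f h - g = d k; so g = [f d] (h, -k) and [f d] : B (+) P -> M is a
   T-precover.  Preenvelopes are dual, using an inflation M -> I into an
   injective object. *)
From Pilot Require Import Defs.
From mathcomp Require Import all_boot all_order all_algebra.
Import GRing.Theory.
Local Open Scope ring_scope.

Section Preadditive.
Context {C : precat}.
Local Notation Hom := (@Defs.hom C).

Lemma compBr a b c (g : Hom b c) (f f' : Hom a b) :
  g \oc (f - f') = g \oc f - g \oc f'.
Proof. by apply/eqP; rewrite eq_sym subr_eq -compDr subrK. Qed.

Lemma compBl a b c (g g' : Hom b c) (f : Hom a b) :
  (g - g') \oc f = g \oc f - g' \oc f.
Proof. by apply/eqP; rewrite eq_sym subr_eq -compDl subrK. Qed.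

Lemma comp0r a b c (g : Hom b c) : g \oc (0 : Hom a b) = 0.
Proof. by rewrite -(subrr (0 : Hom a b)) compBr subrr. Qed.

Lemma comp0l a b c (f : Hom a b) : (0 : Hom b c) \oc f = 0.
Proof. by rewrite -(subrr (0 : Hom b c)) compBl subrr. Qed.

Lemma compNr a b c (g : Hom b c) (f : Hom a b) : g \oc (- f) = - (g \oc f).
Proof. by rewrite -sub0r compBr comp0r sub0r. Qed.

Lemma compNl a b c (g : Hom b c) (f : Hom a b) : (- g) \oc f = - (g \oc f).
Proof. by rewrite -sub0r compBl comp0l sub0r. Qed.

Lemma biproduct_compE a b c x y (i1 : Hom a c) (i2 : Hom b c)
    (p1 : Hom c a) (p2 : Hom c b) (u : Hom x a) (v : Hom x b)
    (s : Hom a y) (t : Hom b y) :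
  p1 \oc i1 = idm a -> p2 \oc i2 = idm b -> p1 \oc i2 = 0 -> p2 \oc i1 = 0 ->
  (s \oc p1 + t \oc p2) \oc (i1 \oc u + i2 \oc v) = s \oc u + t \oc v.
Proof.
move=> e11 e22 e12 e21.
rewrite compDl !compDr -!Defs.compA !(Defs.compA p1) !(Defs.compA p2) e11 e22 e12 e21.
by rewrite !Defs.comp1l !comp0l !comp0r addr0 add0r.
Qed.

Context {E : conflations C}.

Lemma factors_proj_inj_deflation {P M B} {d : Hom P M} {x : Hom B M} :
  adm_epi E d -> factors_proj_inj E x -> exists k : Hom B P, d \oc k = x.
Proof.
move=> Ed [Q [u [v [[projQ _] ->]]]].
have [w <-] := projQ _ _ d Ed v.
by exists (w \oc u); rewrite Defs.compA.
Qed.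

Lemma factors_proj_inj_inflation {I M B} {i : Hom M I} {x : Hom M B} :
  adm_mono E i -> factors_proj_inj E x -> exists k : Hom I B, k \oc i = x.
Proof.
move=> Ei [Q [u [v [[_ injQ] ->]]]].
have [w <-] := injQ _ _ i Ei u.
by exists (v \oc w); rewrite Defs.compA.
Qed.

Context {T : obj C -> Prop} {M : obj C}.
Hypothesis T_additive : additive_subcat T.
Hypothesis biproducts : forall a b : obj C, exists c, is_biproduct a b c.

Lemma has_precover_of_sum_factorization {B P} (f : Hom B M) (d : Hom P M) :
  T B -> T P ->
  (forall B' (g : Hom B' M), T B' ->
     exists (h : Hom B' B) (k : Hom B' P), f \oc h + d \oc k = g) ->
  has_precover T M.
Proof.
move=> TB TP fd_factor; have [c Bc] := biproducts B P.
have Tc : T c by apply: T_additive TB TP Bc.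
have [i1 [i2 [p1 [p2 [e11 e22 e12 e21 _]]]]] := Bc.
exists c, (f \oc p1 + d \oc p2); split=> // B' g TB'.
have [h [k <-]] := fd_factor B' g TB'.
by exists (i1 \oc h + i2 \oc k); rewrite biproduct_compE.
Qed.

Lemma has_preenvelope_of_sum_factorization {B I} (f : Hom M B) (i : Hom M I) :
  T B -> T I ->
  (forall B' (g : Hom M B'), T B' ->
     exists (h : Hom B B') (k : Hom I B'), h \oc f + k \oc i = g) ->
  has_preenvelope T M.
Proof.
move=> TB TI fi_factor; have [c Bc] := biproducts B I.
have Tc : T c by apply: T_additive TB TI Bc.
have [i1 [i2 [p1 [p2 [e11 e22 e12 e21 _]]]]] := Bc.
exists c, (i1 \oc f + i2 \oc i); split=> // B' g TB'.
have [h [k <-]] := fi_factor B' g TB'.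
by exists (h \oc p1 + k \oc p2); rewrite biproduct_compE.
Qed.

Lemma has_precover_of_stable {P} {d : Hom P M} :
  T P -> adm_epi E d -> has_stable_precover T E M -> has_precover T M.
Proof.
move=> TP Ed [B [f [TB f_stable]]].
apply: (has_precover_of_sum_factorization f d TB TP) => B' g TB'.
have [h fh_g] := f_stable B' g TB'.
have [k dk] := factors_proj_inj_deflation Ed fh_g.
by exists h, (- k); rewrite compNr dk opprB addrC subrK.
Qed.

Lemma has_preenvelope_of_stable {I} {i : Hom M I} :
  T I -> adm_mono E i -> has_stable_preenvelope T E M -> has_preenvelope T M.
Proof.
move=> TI Ei [B [f [TB f_stable]]].
apply: (has_preenvelope_of_sum_factorization f i TB TI) => B' g TB'.
have [h hf_g] := f_stable B' g TB'.
have [k ki] := factors_proj_inj_inflation Ei hf_g.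
by exists h, (- k); rewrite compNl ki opprB addrC subrK.
Qed.

End Preadditive.

Theorem lemmaA7 (C : precat) (E : conflations C) (HF : frobenius E)
  (T : obj C -> Prop) (HT : additive_subcat T)
  (HPI : forall X, proj_inj E X -> T X) (M : obj C) :
  (has_stable_precover T E M -> has_precover T M) /\
  (has_stable_preenvelope T E M -> has_preenvelope T M).
Proof.
have [[_ biproducts] _ enough_proj enough_inj proj_iff_inj] := HF.
split.
- have [P [d [projP Ed]]] := enough_proj M.
  have TP : T P by apply: HPI; split=> //; apply/proj_iff_inj.
  exact: (has_precover_of_stable HT biproducts TP Ed).
- have [I [i [injI Ei]]] := enough_inj M.
  have TI : T I by apply: HPI; split=> //; apply/proj_iff_inj.
  exact: (has_preenvelope_of_stable HT biproducts TI Ei).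
Qed.
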